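(* Let $p$ be a prime, let $G$ be a pseudosimple group of split-$p$-$p$ type, and let $C=(C_1,\dots,C_r)$ be a list of unambiguous conjugacy classes of $G$. Then $H_2(G)_C\neq H_2'(G)_C$ if and only if none of the $C_i$ is inert and at least one of the $C_i$ is mixed.
   Context: $G'$ is the derived subgroup, $G^{\mathrm{ab}}=G/G'$. $G$ is pseudosimple if it is a finite centerless group, $G'$ is isomorphic to a power of a nonabelian simple group, and $G/N$ is abelian for every nontrivial normal subgroup $N$. It has split-$p$-$p$ type if $G\to G^{\mathrm{ab}}$ has a section and $|G^{\mathrm{ab}}|=|H_2(G,\mathbb{Z})|=p$. A class is unambiguous if conjugation by $G'$ acts transitively on it. $H_2(G)=H_2(G,\mathbb{Z})$ (the Schur multiplier). For commuting $x,y\in G$, $\langle x,y\rangle\in H_2(G)$ is the image of the fundamental class of $H_2(\mathbb{Z}^2)$ under $(m,n)\mapsto x^my^n$. $H_2(G)_C$ is the subgroup generated by all $\langle g,z\rangle$ with $g\in\bigcup C_i$, $z\in Z(g)$; $H_2'(G)_C$ is the subgroup generated by all $\langle g,z\rangle$ with $g\in\bigcup C_i$, $z\in Z(g)\cap G'$. Let $\tilde G\to G$ be a Schur cover (a central stem extension with kernel $H_2(G)$). An unambiguous class $C_i$ with preimage $\tilde C_i\subseteq\tilde G$ is split if $\tilde C_i$ consists of $p$ conjugacy classes of $\tilde G$; mixed if $\tilde C_i$ is a single $\tilde G$-conjugacy class but splits into $p$ distinct orbits under conjugation by $\tilde G'$; inert otherwise. *)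

From HB Require Import structures.
From mathcomp Require Import all_boot all_order all_algebra all_fingroup all_solvable.
Set Implicit Arguments. Unset Strict Implicit. Unset Printing Implicit Defensive.
Import GRing.Theory.
Local Open Scope group_scope.

Definition power_of_nonabelian_simple (gT : finGroupType) (K : {set gT}) : Prop :=
  exists (sT : finGroupType) (S : {group sT}) (n : nat) (H : 'I_n -> {group gT}),
    [/\ simple S, ~~ abelian S, (forall i, H i \isog S)
      & \big[dprod/1]_(i < n) H i = K].

Definition pseudosimple (gT : finGroupType) (G : {group gT}) : Prop :=
  [/\ 'Z(G) = 1,
      power_of_nonabelian_simple G^`(1)
    & forall N : {group gT}, N <| G -> N :!=: 1 -> abelian (G / N)].

(* Chains: C_1 = Z[G], C_2 = Z[G^2], C_3 = Z[G^3], encoded as integer-valued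
   functions on gT, gT*gT, gT*gT*gT whose support lies in G (resp. G^2, G^3). *)
Local Open Scope ring_scope.

Definition bd2 (gT : finGroupType) (c : {ffun gT * gT -> int}) : {ffun gT -> int} :=
  [ffun g => \sum_(u : gT * gT)
     c u * ((u.2 == g)%:R - ((u.1 * u.2)%g == g)%:R + (u.1 == g)%:R)].

Definition bd3 (gT : finGroupType) (f : {ffun gT * gT * gT -> int})
  : {ffun gT * gT -> int} :=
  [ffun v => \sum_(u : gT * gT * gT)
     f u * (((u.1.2, u.2) == v)%:R - (((u.1.1 * u.1.2)%g, u.2) == v)%:R
            + ((u.1.1, (u.1.2 * u.2)%g) == v)%:R - ((u.1.1, u.1.2) == v)%:R)].

Definition supp2 (gT : finGroupType) (G : {set gT}) (c : {ffun gT * gT -> int}) :=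
  forall u, c u != 0 -> (u.1 \in G) && (u.2 \in G).

Definition supp3 (gT : finGroupType) (G : {set gT}) (f : {ffun gT * gT * gT -> int}) :=
  forall u, f u != 0 -> [&& u.1.1 \in G, u.1.2 \in G & u.2 \in G].

Definition cycle2 (gT : finGroupType) (G : {set gT}) (c : {ffun gT * gT -> int}) :=
  supp2 G c /\ bd2 c = 0.

Definition bdry2 (gT : finGroupType) (G : {set gT}) (c : {ffun gT * gT -> int}) :=
  exists f, supp3 G f /\ c = bd3 f.

(* |H_2(G,Z)| = n : the quotient of 2-cycles by 2-boundaries has exactly n elements *)
Definition H2_order (gT : finGroupType) (G : {set gT}) (n : nat) : Prop :=
  exists s : seq {ffun gT * gT -> int},
    [/\ size s = n,
        (forall c, c \in s -> cycle2 G c),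
        (forall i j, (i < n)%N -> (j < n)%N -> i != j ->
           ~ bdry2 G (nth 0 s i - nth 0 s j))
      & forall c, cycle2 G c -> exists2 c', c' \in s & bdry2 G (c - c')].

(* <x,y> for commuting x, y: class of the cycle [x|y] - [y|x], the image of the
   fundamental class of H_2(Z^2) under (m,n) |-> x^m y^n. *)
Definition pair2 (gT : finGroupType) (x y : gT) : {ffun gT * gT -> int} :=
  [ffun u => (u == (x, y))%:R - (u == (y, x))%:R].

(* c lies in the subgroup of H_2(G) generated by the classes of the chains in S:
   c is congruent mod boundaries to an integer combination of elements of S *)
Definition in_span_H2 (gT : finGroupType) (G : {set gT})
  (S : {ffun gT * gT -> int} -> Prop) (c : {ffun gT * gT -> int}) : Prop :=
  exists s : seq (int * {ffun gT * gT -> int}),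
    (forall a, a \in s -> S a.2) /\
    bdry2 G (c - \sum_(a <- s) (a.2 *~ a.1)).

Definition H2_C (gT : finGroupType) (G : {group gT}) (r : nat)
  (C : 'I_r -> {set gT}) : {ffun gT * gT -> int} -> Prop :=
  in_span_H2 G (fun c => exists i g z,
    [/\ g \in C i, z \in ('C_G[g])%g & c = pair2 g z]).

Definition H2'_C (gT : finGroupType) (G : {group gT}) (r : nat)
  (C : 'I_r -> {set gT}) : {ffun gT * gT -> int} -> Prop :=
  in_span_H2 G (fun c => exists i g z,
    [/\ g \in C i, z \in ('C_G[g] :&: G^`(1))%g & c = pair2 g z]).

Definition same_subgroup_H2 (gT : finGroupType) (G : {set gT})
  (P Q : {ffun gT * gT -> int} -> Prop) : Prop :=
  forall c, cycle2 G c -> (P c <-> Q c).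

Local Close Scope ring_scope.

Definition split_pp_type (p : nat) (gT : finGroupType) (G : {group gT}) : Prop :=
  [/\ exists s : {morphism (G / G^`(1))%G >-> gT},
        forall x, x \in G / G^`(1) -> s x \in G /\ coset G^`(1) (s x) = x,
      #|G / G^`(1)| = p
    & H2_order G p].

Definition unambiguous (gT : finGroupType) (G : {group gT}) (C : {set gT}) : Prop :=
  C \in classes G /\
  forall x y, x \in C -> y \in C -> exists2 g, g \in G^`(1) & y = x ^ g.

(* Schur cover pi : Gt ->> G : central stem extension with kernel H_2(G)
   (kernel of the same order as H_2(G)) *)
Definition schur_cover (gT sT : finGroupType) (G : {group gT}) (Gt : {group sT})
  (pi : {morphism Gt >-> gT}) : Prop :=
  [/\ pi @* Gt = G, 'ker pi \subset 'Z(Gt), 'ker pi \subset Gt^`(1)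
    & H2_order G #|'ker pi|].

Definition split_class (p : nat) (gT sT : finGroupType) (Gt : {group sT})
  (pi : {morphism Gt >-> gT}) (C : {set gT}) : Prop :=
  #|[set x ^: Gt | x in pi @*^-1 C]| = p.

Definition mixed_class (p : nat) (gT sT : finGroupType) (Gt : {group sT})
  (pi : {morphism Gt >-> gT}) (C : {set gT}) : Prop :=
  #|[set x ^: Gt | x in pi @*^-1 C]| = 1%N /\
  #|[set x ^: Gt^`(1) | x in pi @*^-1 C]| = p.

Definition inert_class (p : nat) (gT sT : finGroupType) (Gt : {group sT})
  (pi : {morphism Gt >-> gT}) (C : {set gT}) : Prop :=
  ~ split_class p pi C /\ ~ mixed_class p pi C.

(* By the Schur cover hypotheses, pi : Gt ->> G is a central
   extension whose kernel Z lies in Gt' and has prime order q = |H_2(G)|.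
   Choose a set-theoretic section [lift]; its factor set takes values in Z, and
   read in 'Z_q through a discrete logarithm it is a 2-cocycle, so pairing
   2-chains with it kills boundaries.  Since Z lies in Gt', every element of Z
   is a product of commutators, and unwinding such a product gives a 2-cycle
   pairing to its discrete logarithm: the pairing is onto 'Z_q, hence (by
   counting) an isomorphism H_2(G) ~ 'Z_q.
   It sends <g, pi x> to zero exactly when x commutes with the lift of g.
   Call g twisted by a subgroup H of Gt if some x in H centralises g modulo Z
   but not the lift of g.  As H_2(G) has prime order, H_2(G)_C (resp.
   H_2'(G)_C) is all of H_2(G) or trivial according as the classes C_i contain
   an element twisted by Gt (resp. by Gt').  On the other hand the preimage of a
   class splits into a single H-class if its elements are twisted by H and into
   q of them otherwise, which expresses split, mixed and inert classes through
   the same two conditions. *)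

From HB Require Import structures.
From mathcomp Require Import all_boot all_order all_algebra all_fingroup all_solvable.
From mathcomp Require Import ring.
Set Implicit Arguments. Unset Strict Implicit. Unset Printing Implicit Defensive.
Import GRing.Theory.

Lemma Zp_mulrn_onto p (w v : 'Z_p) : prime p -> w != 0%R -> exists k, v = (w *+ k)%R.
Proof.
move=> p_pr nz_w; have p_gt1 := prime_gt1 p_pr.
have w_unit : w \is a GRing.unit.
  rewrite -[w]natr_Zp unitZpE // prime_coprime //; apply/negP => /dvdn_leq.
  rewrite lt0n => /(_ nz_w); apply/negP; rewrite -ltnNge.
  by case: w {nz_w} => n /=; rewrite Zp_cast.
by exists (w^-1 * v)%R; rewrite -mulr_natr natr_Zp mulVKr.
Qed.

(** * The bar complex *)

Section BarComplex.
Variables (gT : finGroupType) (G : {set gT}).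
Local Open Scope ring_scope.
Implicit Types (a b c : {ffun gT * gT -> int}) (f h : {ffun gT * gT * gT -> int}).

Lemma bd2_is_zmod_morphism : zmod_morphism (@bd2 gT).
Proof.
move=> a b; apply/ffunP=> g; rewrite !ffunE -sumrB.
by apply: eq_bigr => u _; rewrite !ffunE mulrBl.
Qed.
HB.instance Definition _ :=
  GRing.isZmodMorphism.Build _ _ (@bd2 gT) bd2_is_zmod_morphism.

Lemma bd3_is_zmod_morphism : zmod_morphism (@bd3 gT).
Proof.
move=> f h; apply/ffunP=> v; rewrite !ffunE -sumrB.
by apply: eq_bigr => u _; rewrite !ffunE mulrBl.
Qed.
HB.instance Definition _ :=
  GRing.isZmodMorphism.Build _ _ (@bd3 gT) bd3_is_zmod_morphism.

Lemma supp20 : supp2 G 0.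
Proof. by move=> u; rewrite ffunE eqxx. Qed.

Lemma supp2D a b : supp2 G a -> supp2 G b -> supp2 G (a + b).
Proof.
move=> Ga Gb u; rewrite ffunE; have [->|/Ga //] := eqVneq (a u) 0.
by rewrite add0r => /Gb.
Qed.

Lemma supp2N a : supp2 G a -> supp2 G (- a).
Proof. by move=> Ga u; rewrite ffunE oppr_eq0 => /Ga. Qed.

Lemma supp2Mz a k : supp2 G a -> supp2 G (a *~ k).
Proof.
move=> Ga u; rewrite ffunMzE; have [->|/Ga //] := eqVneq (a u) 0.
by rewrite mul0rz eqxx.
Qed.

Lemma supp3D f h : supp3 G f -> supp3 G h -> supp3 G (f + h).
Proof.
move=> Gf Gh u; rewrite ffunE; have [->|/Gf //] := eqVneq (f u) 0.
by rewrite add0r => /Gh.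
Qed.

Lemma supp3N f : supp3 G f -> supp3 G (- f).
Proof. by move=> Gf u; rewrite ffunE oppr_eq0 => /Gf. Qed.

Lemma bdry2B a b : bdry2 G a -> bdry2 G b -> bdry2 G (a - b).
Proof.
move=> [f [Gf ->]] [h [Gh ->]]; exists (f - h).
by rewrite raddfB; split=> //; apply/supp3D/supp3N.
Qed.

Lemma cycle2_0 : cycle2 G 0.
Proof. by split; [apply: supp20 | apply: raddf0]. Qed.

Lemma cycle2B a b : cycle2 G a -> cycle2 G b -> cycle2 G (a - b).
Proof.
case=> Ga ba [Gb bb]; split; first exact/supp2D/supp2N.
by rewrite raddfB /= ba bb subrr.
Qed.

Lemma cycle2Mz a k : cycle2 G a -> cycle2 G (a *~ k).
Proof. by case=> Ga ba; split; [exact: supp2Mz | rewrite raddfMz /= ba mul0rz]. Qed.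

Definition delta1 (x : gT) : {ffun gT -> int} := [ffun g => (x == g)%:R].
Definition delta2 (x y : gT) : {ffun gT * gT -> int} :=
  [ffun u => (u == (x, y))%:R].

Lemma supp2_delta2 x y : x \in G -> y \in G -> supp2 G (delta2 x y).
Proof.
move=> Gx Gy u; rewrite ffunE; have [-> _ | _] := eqVneq u (x, y).
  by rewrite Gx Gy.
by rewrite eqxx.
Qed.

Lemma bd2_delta2 x y :
  bd2 (delta2 x y) = delta1 y - delta1 (x * y)%g + delta1 x.
Proof.
apply/ffunP=> g; rewrite !ffunE (bigD1 (x, y)) //= !ffunE eqxx mul1r.
by rewrite big1 ?addr0 // => u /negbTE neq; rewrite ffunE neq mul0r.
Qed.

Definition delta3 (u : gT * gT * gT) : {ffun gT * gT * gT -> int} :=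
  [ffun v => (v == u)%:R].

Lemma chain3_expand f : f = \sum_u delta3 u *~ f u.
Proof.
apply/ffunP=> v; rewrite sum_ffunE (bigD1 v) //= ffunMzE ffunE eqxx mulrzz mul1r.
by rewrite big1 ?addr0 // => u /negbTE neq; rewrite ffunMzE ffunE eq_sym neq mul0rz.
Qed.

Lemma bd3_delta3 x y z : bd3 (delta3 (x, y, z)) =
  delta2 y z - delta2 (x * y)%g z + delta2 x (y * z)%g - delta2 x y.
Proof.
apply/ffunP=> v; rewrite !ffunE (bigD1 (x, y, z)) //= ffunE eqxx mul1r.
rewrite big1 ?addr0 => [|u /negbTE neq]; last by rewrite ffunE neq mul0r.
by rewrite ![v == _]eq_sym.
Qed.

Lemma pair2E x y : pair2 x y = delta2 x y - delta2 y x.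
Proof. by apply/ffunP=> u; rewrite !ffunE. Qed.

Lemma cycle2_pair2 x y :
  x \in G -> y \in G -> commute x y -> cycle2 G (pair2 x y).
Proof.
move=> Gx Gy cxy; rewrite pair2E; split.
  by apply/supp2D/supp2N; apply: supp2_delta2.
by rewrite raddfB /= !bd2_delta2 cxy; apply/ffunP=> g; rewrite !ffunE; ring.
Qed.

Lemma H2_order_leq n m : H2_order G n -> H2_order G m -> (n <= m)%N.
Proof.
move=> [s [sz scyc sdis _]] [t [tz _ _ tcov]].
have /fin_all_exists[F FP] (i : 'I_n) :
    exists j : 'I_m, bdry2 G (nth 0 s i - nth 0 t j).
  have /tcov[c' c't hb] : cycle2 G (nth 0 s i) by apply/scyc/mem_nth; rewrite sz.
  have lt_m : (index c' t < m)%N by rewrite -tz index_mem.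
  by exists (Ordinal lt_m); rewrite nth_index.
have injF : injective F.
  move=> i i' eqF; apply/eqP; apply: contraT => neq; case: (sdis i i') => //.
  by have := bdry2B (FP i) (FP i'); rewrite eqF opprB addrA subrK.
by have := leq_card F injF; rewrite !card_ord.
Qed.

Lemma H2_order_uniq n m : H2_order G n -> H2_order G m -> n = m.
Proof.
by move=> Hn Hm; apply/eqP; rewrite eqn_leq !H2_order_leq.
Qed.

End BarComplex.

Local Open Scope group_scope.

(** * Pairing 2-chains with the factor set of the cover *)

Section SchurCover.
Variables (gT sT : finGroupType) (G : {group gT}) (Gt : {group sT}).
Variable pi : {morphism Gt >-> gT}.
Hypotheses (piGt : pi @* Gt = G) (ker_center : 'ker pi \subset 'Z(Gt)).
Hypotheses (ker_prime : prime #|'ker pi|) (ker_der : 'ker pi \subset Gt^`(1)).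

Local Notation Z := ('ker pi).
Local Notation q := #|'ker pi|.

Lemma morph_in t : t \in Gt -> pi t \in G.
Proof. by move=> Gt_t; rewrite -piGt mem_morphim. Qed.

Lemma ker_commute z t : z \in Z -> t \in Gt -> commute z t.
Proof. by move=> /(subsetP ker_center)/centerP[_ cz] /cz. Qed.

Lemma ker_in z : z \in Z -> z \in Gt.
Proof. by move=> /(subsetP ker_center)/centerP[]. Qed.

Lemma mem_ker_pi t : t \in Gt -> pi t = 1 -> t \in Z.
Proof. by move=> Gt_t /(kerP pi Gt_t). Qed.

(* Lifting 1 to 1 normalizes the factor set and makes [lift_defect] the
   identity on [Z]. *)
Definition lift (x : gT) : sT :=
  if x == 1 then 1 else odflt 1 [pick t in Gt | pi t == x].

Lemma lift1 : lift 1 = 1.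
Proof. by rewrite /lift eqxx. Qed.

Lemma lift_in x : x \in G -> lift x \in Gt.
Proof.
rewrite /lift; case: eqP => // _; rewrite -piGt => /morphimP[t Gt_t _ ->].
by case: pickP => [t' /andP[] | /(_ t)] //; rewrite Gt_t eqxx.
Qed.

Lemma pi_lift x : x \in G -> pi (lift x) = x.
Proof.
rewrite /lift; case: eqP => [-> _ | _]; first exact: morph1.
rewrite -piGt => /morphimP[t Gt_t _ ->].
by case: pickP => [t' /andP[_ /eqP] | /(_ t)] //; rewrite Gt_t eqxx.
Qed.

Definition factor_set (x y : gT) : sT := lift x * lift y * (lift (x * y))^-1.

Lemma lift_factor_set x y : lift x * lift y = factor_set x y * lift (x * y).
Proof. by rewrite mulgKV. Qed.

Lemma factor_set_ker x y : x \in G -> y \in G -> factor_set x y \in Z.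
Proof.
move=> Gx Gy; have Gxy := groupM Gx Gy.
have := lift_in Gx; have := lift_in Gy; have := lift_in Gxy => Gt_xy Gt_y Gt_x.
apply: mem_ker_pi; first by rewrite !(groupM, groupV).
by rewrite !(morphM, morphV, groupM, groupV) // !pi_lift // mulgV.
Qed.

Lemma factor_set_cocycle x y z : x \in G -> y \in G -> z \in G ->
  factor_set y z * factor_set x (y * z) = factor_set x y * factor_set (x * y) z.
Proof.
move=> Gx Gy Gz.
have -> : factor_set x y * factor_set (x * y) z =
          lift x * lift y * lift z * (lift (x * y * z))^-1.
  by rewrite /factor_set !mulgA mulgKV.
have cx := ker_commute (factor_set_ker Gy Gz) (lift_in Gx).
by rewrite {2}/factor_set !mulgA cx /factor_set !mulgA mulgKV.
Qed.

Definition ker_gen : sT := odflt 1 [pick z | Z == <[z]>].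

Lemma ker_genE : Z = <[ker_gen]>.
Proof.
rewrite /ker_gen; case: pickP => [z /eqP // | none].
have /cyclicP[z defZ] := prime_cyclic ker_prime.
by have := none z; rewrite defZ eqxx.
Qed.

Lemma q_gt1 : (1 < q)%N. Proof. exact: prime_gt1. Qed.

Lemma q_neq1 : q <> 1%N. Proof. by move=> q1; have := q_gt1; rewrite q1. Qed.

Local Open Scope ring_scope.

Definition zlog (z : sT) : 'Z_q :=
  if [pick k : 'I_q | ker_gen ^+ k == z]%g is Some k then (k : nat)%:R else 0.

Lemma order_ker_gen : #[ker_gen]%g = q.
Proof. by rewrite orderE -ker_genE. Qed.

Lemma zlogX k : zlog (ker_gen ^+ k)%g = k%:R.
Proof.
rewrite /zlog; case: pickP => [k' /eqP eq_k' | none].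
  have eq_mod : (k' : nat) = k %[mod #[ker_gen]%g].
    by apply/eqP; rewrite -eq_expg_mod_order eq_k'.
  by rewrite order_ker_gen in eq_mod; rewrite -(Zp_nat_mod q_gt1 k') eq_mod Zp_nat_mod ?q_gt1.
have lt_kq : (k %% q < q)%N by rewrite ltn_mod ltnW ?q_gt1.
by have := none (Ordinal lt_kq); rewrite /= -order_ker_gen expg_mod_order eqxx.
Qed.

Lemma ker_expP z : z \in Z -> exists k, z = (ker_gen ^+ k)%g.
Proof. by rewrite ker_genE => /cycleP. Qed.

Lemma zlogM z z' : z \in Z -> z' \in Z -> zlog (z * z')%g = zlog z + zlog z'.
Proof. by move=> /ker_expP[a ->] /ker_expP[b ->]; rewrite -expgD !zlogX natrD. Qed.

Lemma zlog1 : zlog 1 = 0.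
Proof. by rewrite -(expg0 ker_gen) zlogX. Qed.

Lemma zlogV z : z \in Z -> zlog z^-1%g = - zlog z.
Proof.
by move=> Zz; apply/eqP; rewrite -addr_eq0 -zlogM ?groupV // mulVg zlog1.
Qed.

Lemma zlog_eq0 z : z \in Z -> (zlog z == 0) = (z == 1%g).
Proof.
move=> /ker_expP[k ->]; rewrite zlogX -(expg0 ker_gen) eq_expg_mod_order.
by rewrite order_ker_gen -val_eqE /= val_Zp_nat ?q_gt1 // mod0n.
Qed.

Lemma zlog_surj (v : 'Z_q) : zlog (ker_gen ^+ v)%g = v.
Proof.
rewrite zlogX; apply: val_inj; rewrite /= val_Zp_nat ?q_gt1 //.
by case: v => n /=; rewrite Zp_cast ?q_gt1 // => /modn_small.
Qed.

Definition pairing (c : {ffun gT * gT -> int}) : 'Z_q :=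
  \sum_u (c u)%:~R * zlog (factor_set u.1 u.2).

Arguments pairing c : simpl never.

Lemma pairing_is_zmod_morphism : zmod_morphism pairing.
Proof.
move=> a b; rewrite /pairing -sumrB.
by apply: eq_bigr => u _; rewrite !ffunE intrB mulrBl.
Qed.
HB.instance Definition _ :=
  GRing.isZmodMorphism.Build _ _ pairing pairing_is_zmod_morphism.

Lemma pairing_delta2 x y : pairing (delta2 x y) = zlog (factor_set x y).
Proof.
rewrite /pairing (bigD1 (x, y)) //= ffunE eqxx mul1r.
by rewrite big1 ?addr0 // => u /negbTE neq; rewrite ffunE neq mul0r.
Qed.

Lemma pairing_bd3 f : supp3 G f -> pairing (bd3 f) = 0.
Proof.
move=> Gf; rewrite [f]chain3_expand !raddf_sum big1 // => -[[x y] z] _ /=.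
have [-> | /Gf /and3P[/= Gx Gy Gz]] := eqVneq (f (x, y, z)) 0.
  by rewrite mulr0z !raddf0.
rewrite !raddfMz /=; suff -> : pairing (bd3 (delta3 (x, y, z))) = 0 by rewrite mul0rz.
have := congr1 zlog (factor_set_cocycle Gx Gy Gz).
rewrite [LHS]zlogM ?[RHS]zlogM ?factor_set_ker ?groupM // => cocycle.
rewrite bd3_delta3 !raddfD !raddfN /= !pairing_delta2.
move: cocycle; set a := zlog _; set b := zlog _; set c := zlog _; set d := zlog _.
by move=> cocycle; apply/eqP; rewrite [a - d + b]addrAC -[_ - c]addrA -opprD subr_eq0 cocycle addrC.
Qed.

Lemma pairing_bdry c : bdry2 G c -> pairing c = 0.
Proof. by case=> f [Gf ->]; apply: pairing_bd3. Qed.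

Local Close Scope ring_scope.

Definition lift_defect (t : sT) : sT := (lift (pi t))^-1 * t.

Lemma lift_defectK t : lift (pi t) * lift_defect t = t.
Proof. exact: mulKVg. Qed.

Lemma lift_defect_ker t : t \in Gt -> lift_defect t \in Z.
Proof.
move=> Gt_t; have Gt_l := lift_in (morph_in Gt_t).
apply: mem_ker_pi; first by rewrite groupM ?groupV.
by rewrite morphM ?groupV // morphV // pi_lift ?morph_in ?mulVg.
Qed.

Lemma lift_defect_ker_id z : z \in Z -> lift_defect z = z.
Proof. by move=> Zz; rewrite /lift_defect mker // lift1 invg1 mul1g. Qed.

Lemma lift_defectM t t' : t \in Gt -> t' \in Gt ->
  lift_defect (t * t') = factor_set (pi t) (pi t') * lift_defect t * lift_defect t'.
Proof.
move=> Gt_t Gt_t'; have [Gx Gy] := (morph_in Gt_t, morph_in Gt_t').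
have Gt_l := lift_in (groupM Gx Gy); have Gt_ly := lift_in Gy.
apply: (mulgI (lift (pi (t * t')))); rewrite lift_defectK morphM //.
(* Generalizing keeps [mulgA] from unfolding [factor_set] and [lift_defect],
   which are products themselves. *)
have := lift_defectK t; have := lift_defectK t'; have := lift_defect_ker Gt_t.
have := lift_factor_set (pi t) (pi t'); have := factor_set_ker Gx Gy.
move: (factor_set _ _) (lift_defect t) (lift_defect t') => f d d' Zf fK Zd kd' kd.
rewrite -[in LHS]kd -[in LHS]kd' !mulgA -(ker_commute Zf Gt_l) -fK.
rewrite -(mulgA _ d) (ker_commute Zd Gt_ly).
by rewrite !mulgA.
Qed.

Local Open Scope ring_scope.

Lemma zlog_lift_defectM t t' : t \in Gt -> t' \in Gt ->
  zlog (lift_defect (t * t')) =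
  zlog (factor_set (pi t) (pi t')) + zlog (lift_defect t) + zlog (lift_defect t').
Proof.
move=> Gt_t Gt_t'; have Zf := factor_set_ker (morph_in Gt_t) (morph_in Gt_t').
have Zd := lift_defect_ker Gt_t; have Zd' := lift_defect_ker Gt_t'.
by rewrite lift_defectM // zlogM ?(groupM Zf Zd) // zlogM.
Qed.

(* Witnesses multiply along products in [Gt] ([chain_forM]); for a product of
   commutators lying in [Z] this produces a 2-cycle whose pairing is the
   discrete logarithm of the product. *)
Definition chain_for (t : sT) (d : {ffun gT -> int}) (k : 'Z_q) :=
  exists c, [/\ supp2 G c, bd2 c = delta1 (pi t) - d
               & pairing c = k - zlog (lift_defect t)].

Lemma chain_for_lift t : chain_for t (delta1 (pi t)) (zlog (lift_defect t)).
Proof. by exists 0; rewrite !raddf0 !subrr; split=> //; apply: supp20. Qed.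

Lemma chain_forM t t' d d' k k' : t \in Gt -> t' \in Gt ->
  chain_for t d k -> chain_for t' d' k' -> chain_for (t * t')%g (d + d') (k + k').
Proof.
move=> Gt_t Gt_t' [c [Gc bd_c pc]] [c' [Gc' bd_c' pc']].
have [Gx Gy] := (morph_in Gt_t, morph_in Gt_t').
exists (c + c' - delta2 (pi t) (pi t')); split.
- by apply/supp2D/supp2N/supp2_delta2 => //; apply: supp2D.
- rewrite raddfB raddfD /= bd_c bd_c' bd2_delta2 morphM //.
  by apply/ffunP=> g; rewrite !ffunE; ring.
rewrite raddfB raddfD /= pc pc' pairing_delta2 zlog_lift_defectM //.
by ring.
Qed.

Lemma chain_forV t : t \in Gt ->
  chain_for t^-1 (delta1 1 - delta1 (pi t)) (- zlog (lift_defect t)).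
Proof.
move=> Gt_t; have Gx := morph_in Gt_t; have Gt_t' := groupVr Gt_t.
exists (delta2 (pi t)^-1 (pi t)); split; first by apply: supp2_delta2; rewrite ?groupV.
  by rewrite bd2_delta2 mulVg morphV //; apply/ffunP=> g; rewrite !ffunE; ring.
have := zlog_lift_defectM Gt_t' Gt_t; rewrite mulVg lift_defect_ker_id // zlog1.
by move/eqP; rewrite eq_sym -addrA addr_eq0 morphV // pairing_delta2 => /eqP ->; ring.
Qed.

Lemma chain_for_commg a b : a \in Gt -> b \in Gt -> chain_for [~ a, b]%g (delta1 1 *~ 2) 0.
Proof.
move=> Gt_a Gt_b; have [Gt_a' Gt_b'] := (groupVr Gt_a, groupVr Gt_b).
have := chain_forM (groupM (groupM Gt_a' Gt_b') Gt_a) Gt_b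
  (chain_forM (groupM Gt_a' Gt_b') Gt_a
    (chain_forM Gt_a' Gt_b' (chain_forV Gt_a) (chain_forV Gt_b)) (chain_for_lift a))
  (chain_for_lift b).
rewrite -!mulgA -conjgE -commgEl => -[c [Gc bd_c pc]]; exists c; split=> //.
  by rewrite bd_c; apply/ffunP=> g; rewrite !(ffunE, ffunMzE); ring.
by rewrite pc; ring.
Qed.

Lemma chain_for_der t : t \in Gt^`(1)%g -> exists m, chain_for t (delta1 1 *~ m) 0.
Proof.
rewrite derg1 => /gen_prodgP[n [c c_comm ->]].
have Gt_c i : c i \in Gt by have /imset2P[a b Ga Gb ->] := c_comm i; apply: groupR.
elim: n c c_comm Gt_c => [|n IHn] c c_comm Gt_c.
  exists 1; rewrite big_ord0 mulr1z.
  by have := chain_for_lift 1; rewrite morph1 lift_defect_ker_id ?group1 // zlog1.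
rewrite big_ord_recr /=.
have [m Hm] := IHn (fun i => c (widen_ord (leqnSn n) i)) (fun i => c_comm _) (fun i => Gt_c _).
have /imset2P[a b Gt_a Gt_b c_ab] := c_comm ord_max.
exists (m + 2); rewrite mulrzDr -[0]addr0 c_ab.
by apply: chain_forM; rewrite ?group_prod ?groupR //; apply: chain_for_commg.
Qed.

Lemma pairing_surj_ker z : z \in Z -> exists c, cycle2 G c /\ pairing c = zlog z.
Proof.
move=> Zz; have [m [c [Gc bd_c pc]]] := chain_for_der (subsetP ker_der _ Zz).
rewrite mker // in bd_c; rewrite lift_defect_ker_id // sub0r in pc.
have factor_set11 : factor_set 1 1 = 1%g by rewrite /factor_set mulg1 lift1 invg1 !mulg1.
exists (- (c + delta2 1 1 *~ (m - 1))); split; first split.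
- by apply/supp2N/supp2D/supp2Mz/supp2_delta2.
- rewrite raddfN raddfD raddfMz /= bd_c bd2_delta2 mulg1.
  by apply/ffunP=> g; rewrite !(ffunE, ffunMzE) !mulrzz; ring.
by rewrite raddfN raddfD raddfMz /= pc pairing_delta2 factor_set11 zlog1 mul0rz addr0 opprK.
Qed.

Lemma pairing_surj v : exists c, cycle2 G c /\ pairing c = v.
Proof.
rewrite -(zlog_surj v); apply: pairing_surj_ker.
by apply: groupX; rewrite -cycle_subG -ker_genE.
Qed.

(* Since [pairing] kills boundaries and is onto ['Z_q], a homology group of
   order [q] makes it injective on homology classes. *)
Lemma pairing_eq0_bdry : H2_order G q ->
  forall c, cycle2 G c -> pairing c = 0 -> bdry2 G c.
Proof.
case=> s [sz scyc _ scov].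
have cov c : cycle2 G c -> exists i : 'I_q, bdry2 G (c - nth 0 s i).
  move=> /scov[c' c's hb]; have lt_q : (index c' s < q)%N by rewrite -sz index_mem.
  by exists (Ordinal lt_q); rewrite /= nth_index.
have pairing_nth c i : bdry2 G (c - nth 0 s i) -> pairing (nth 0 s i) = pairing c.
  by move/pairing_bdry/eqP; rewrite raddfB subr_eq0 eq_sym => /eqP.
pose F (i : 'I_q) := pairing (nth 0 s i).
have F_inj : {in 'I_q &, injective F}.
  apply/image_injP; rewrite eqn_leq leq_image_card /= card_ord.
  have card_Zq : #|{: 'Z_q}| = q by rewrite card_ord Zp_cast ?q_gt1.
  rewrite -{1}card_Zq subset_leq_card //; apply/subsetP => v _.
  have [c [cyc_c <-]] := pairing_surj v; have [i /pairing_nth Fi] := cov _ cyc_c.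
  by apply/imageP; exists i.
move=> c cyc_c pc; have [i ci] := cov _ cyc_c; have [j cj] := cov _ (cycle2_0 G).
have eq_ij : i = j by apply: F_inj; rewrite // /F (pairing_nth _ _ ci) (pairing_nth _ _ cj) pc raddf0.
by have := bdry2B ci cj; rewrite eq_ij sub0r opprK subrK.
Qed.

Local Close Scope ring_scope.

Lemma commg_mulr_ker a b z : a \in Gt -> b \in Gt -> z \in Z -> [~ a, b * z] = [~ a, b].
Proof.
move=> Gt_a Gt_b Zz.
have c_az : [~ a, z] = 1 by apply/eqP/commgP/esym/ker_commute.
have c_abz : [~ a, b] ^ z = [~ a, b].
  by apply/conjg_fixP/commgP/esym/ker_commute; rewrite ?groupR.
by rewrite commgMJ c_az c_abz mul1g.
Qed.

Lemma pairing_pair2 g x : g \in G -> x \in Gt -> pi x \in 'C[g] ->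
  (pairing (pair2 g (pi x)) == 0)%R = ([~ lift g, x] == 1).
Proof.
move=> Gg Gt_x /cent1P c_xg; have Gx := morph_in Gt_x.
rewrite -[X in [~ _, X]](lift_defectK x) commg_mulr_ker ?lift_defect_ker ?lift_in //.
have Zf := factor_set_ker Gg Gx; have Zf' := factor_set_ker Gx Gg.
rewrite pair2E raddfB /= !pairing_delta2 -zlogV // -zlogM ?groupV //.
rewrite zlog_eq0; last by rewrite groupM ?groupV.
rewrite /factor_set -c_xg invMg invgK mulgA mulgKV -eq_mulgV1.
exact: sameP eqP commgP.
Qed.

(** * Lifting conjugacy classes *)

Lemma ker_conj z h : z \in Z -> h \in Gt -> z ^ h = z.
Proof. by move=> Zz Gt_h; apply/conjg_fixP/commgP/ker_commute. Qed.

Lemma eq_pi_mulker t t' : t \in Gt -> t' \in Gt -> pi t = pi t' ->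
  exists2 z, z \in Z & t' = t * z.
Proof.
move=> Gt_t Gt_t' eq_pi; exists (t^-1 * t'); last by rewrite mulKVg.
by apply: mem_ker_pi; rewrite ?groupM ?groupV // morphM ?groupV // morphV // eq_pi mulVg.
Qed.

Lemma commg_lift_ker g x : g \in G -> x \in Gt -> pi x \in 'C[g] -> [~ lift g, x] \in Z.
Proof.
move=> Gg Gt_x /cent1P c_xg; apply: mem_ker_pi; first by rewrite groupR ?lift_in.
by rewrite morphR ?lift_in // pi_lift //; apply/eqP/commgP/esym.
Qed.

Lemma ker_cycle c : c \in Z -> c != 1 -> Z = <[c]>.
Proof.
move=> Zc nc; have sZc : <[c]> \subset Z by rewrite cycle_subG.
have /primeP[_ /(_ _ (cardSg sZc))/orP[/eqP c1 | /eqP cq]] := ker_prime.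
  by move: nc; rewrite -order_eq1 orderE c1.
by apply/eqP; rewrite eq_sym eqEcard sZc cq leqnn.
Qed.

Definition twisted (H : {set sT}) (g : gT) : bool :=
  [exists x in H, (pi x \in 'C[g]) && ([~ lift g, x] != 1)].

Lemma twistedS (H K : {set sT}) g : H \subset K -> twisted H g -> twisted K g.
Proof.
move=> sHK /existsP[x /andP[Hx twx]]; apply/existsP; exists x.
by rewrite (subsetP sHK).
Qed.

Lemma twistedJ (H : {group sT}) g h : H <| Gt -> h \in Gt -> g \in G ->
  twisted H g -> twisted H (g ^ pi h).
Proof.
move=> nHGt Gt_h Gg /existsP[x /and3P[Hx c_xg nc_x]].
have Gt_x := subsetP (normal_sub nHGt) x Hx.
have Gt_lh : lift g ^ h \in Gt by rewrite groupJ ?lift_in.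
apply/existsP; exists (x ^ h).
rewrite memJ_norm ?(subsetP (normal_norm nHGt)) // Hx morphJ // cent1J memJ_conjg c_xg.
have [z Zz ->] : exists2 z, z \in Z & lift (g ^ pi h) = lift g ^ h * z.
  apply: eq_pi_mulker => //; first by rewrite lift_in ?groupJ ?morph_in.
  by rewrite morphJ ?lift_in // !pi_lift ?groupJ ?morph_in.
rewrite /= -(commg1_sym (x ^ h)) commg_mulr_ker ?groupJ ?lift_in //.
by rewrite -conjRg conjg_eq1 (commg1_sym x).
Qed.

Section LiftClasses.
Variables (H : {group sT}) (C : {set gT}) (g : gT).
Hypotheses (sHGt : H \subset Gt) (Gg : g \in G) (Cg : g \in C).
Hypothesis C_transitive : forall y, y \in C -> exists2 h, h \in H & y = g ^ pi h.

Local Notation lg := (lift g).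

Lemma pi_lift_mulker z : z \in Z -> pi (lg * z) = g.
Proof. by move=> Zz; rewrite morphM ?lift_in ?ker_in // (mker Zz) mulg1 pi_lift. Qed.

Lemma lift_classesE : [set x ^: H | x in pi @*^-1 C] = [set (lg * z) ^: H | z in Z].
Proof.
apply/setP=> X; apply/imsetP/imsetP=> [[x /morphpreP[Gt_x /C_transitive[h Hh pi_x]] ->] | [z Zz ->]].
  have Gt_h := subsetP sHGt h Hh.
  have [z Zz ->] : exists2 z, z \in Z & x = lg ^ h * z.
    apply: eq_pi_mulker => //; first by rewrite groupJ ?lift_in.
    by rewrite morphJ ?lift_in // pi_lift.
  by exists z; rewrite // -(classGidl (lg * z) Hh) conjMg (ker_conj Zz Gt_h).
by exists (lg * z) => //; apply/morphpreP; rewrite groupM ?lift_in ?ker_in ?pi_lift_mulker.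
Qed.

Lemma card_lift_classes_untwisted :
  ~~ twisted H g -> #|[set x ^: H | x in pi @*^-1 C]| = q.
Proof.
move=> untw; rewrite lift_classesE card_in_imset // => z z' Zz Zz' eq_cl.
have /imsetP[h Hh lz'] : lg * z' \in (lg * z) ^: H by rewrite eq_cl class_refl.
have Gt_h := subsetP sHGt h Hh; have Gt_lg := lift_in Gg.
have c_hg : pi h \in 'C[g].
  apply/cent1P/esym/commgP; rewrite -conjg_fix; apply/eqP.
  have := congr1 pi lz'; rewrite morphJ ?(groupM Gt_lg (ker_in Zz)) //.
  by rewrite (pi_lift_mulker Zz') (pi_lift_mulker Zz).
have lg_h : lg ^ h = lg.
  by apply/conjg_fixP; apply: contraR untw => nc; apply/existsP; exists h; rewrite Hh c_hg.
by move: lz'; rewrite conjMg (ker_conj Zz Gt_h) lg_h => /mulgI.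
Qed.

Lemma conj_lift_expg x k : x \in Gt -> [~ lg, x] \in Z ->
  lg ^ (x ^+ k) = lg * [~ lg, x] ^+ k.
Proof.
move=> Gt_x Zc; elim: k => [|k IHk]; first by rewrite conjg1 expg0 mulg1.
have lg_x : lg ^ x = lg * [~ lg, x] by rewrite commgEl mulKVg.
by rewrite expgSr conjgM IHk conjMg (ker_conj (groupX k Zc) Gt_x) lg_x -mulgA -expgS.
Qed.

Lemma card_lift_classes_twisted :
  twisted H g -> #|[set x ^: H | x in pi @*^-1 C]| = 1%N.
Proof.
case/existsP=> x /and3P[Hx c_xg nc_x]; have Gt_x := subsetP sHGt x Hx.
have Zc := commg_lift_ker Gg Gt_x c_xg.
have defZ := ker_cycle Zc nc_x.
rewrite lift_classesE -(cards1 (lg ^: H)); congr #|pred_of_set _|.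
apply/setP=> X; rewrite inE; apply/imsetP/eqP=> [[z] | ->]; last by exists 1; rewrite ?mulg1.
rewrite defZ => /cycleP[k ->] ->.
by rewrite -conj_lift_expg // classGidl // groupX.
Qed.

Lemma card_lift_classes :
  #|[set x ^: H | x in pi @*^-1 C]| = if twisted H g then 1%N else q.
Proof.
by case: ifPn => [/card_lift_classes_twisted | /card_lift_classes_untwisted].
Qed.

End LiftClasses.

Section UnambiguousClass.
Variable C : {set gT}.
Hypothesis unambC : unambiguous G C.

Local Notation g := (repr C).

Lemma class_sub y : y \in C -> y \in G.
Proof. by case: unambC => /imsetP[x Gx ->] _ /imsetP[h Gh ->]; rewrite groupJ. Qed.

Lemma repr_class : g \in C.
Proof. by case: unambC => /imsetP[x _ ->] _; apply: (mem_repr x); rewrite class_refl. Qed.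

Lemma class_der_transitive y : y \in C -> exists2 h, h \in Gt^`(1) & y = g ^ pi h.
Proof.
move=> Cy; have [_ /(_ _ _ repr_class Cy)[k]] := unambC.
by rewrite -piGt -morphim_der // => /morphimP[h _ Gt'h ->]; exists h.
Qed.

Lemma twisted_class (H : {group sT}) y : H <| Gt -> y \in C ->
  twisted H y -> twisted H g.
Proof.
move=> nHGt Cy; have [h Gt'h def_y] := class_der_transitive Cy.
have Gt_h : h \in Gt := subsetP (der_sub 1 Gt) h Gt'h.
move/(twistedJ nHGt (groupVr Gt_h) (class_sub Cy)).
by rewrite morphV // def_y conjgK.
Qed.

Lemma card_lift_classes_of (H : {group sT}) : Gt^`(1) \subset H -> H \subset Gt ->
  #|[set x ^: H | x in pi @*^-1 C]| = if twisted H g then 1%N else q.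
Proof.
move=> sGt'H sHGt; apply: card_lift_classes => //; first exact: class_sub repr_class.
  exact: repr_class.
by move=> y /class_der_transitive[h Gt'h ->]; exists h; rewrite ?(subsetP sGt'H).
Qed.

Lemma split_classE : split_class q pi C <-> ~~ twisted Gt g.
Proof.
rewrite /split_class card_lift_classes_of ?der_sub //.
by case: (twisted _ _); split=> // /esym/q_neq1.
Qed.

Lemma mixed_classE : mixed_class q pi C <-> twisted Gt g && ~~ twisted Gt^`(1) g.
Proof.
rewrite /mixed_class !card_lift_classes_of ?der_sub //.
have := q_neq1; case: (twisted Gt g); case: (twisted _ _) => /= q_ne1.
- by split=> // -[_ /esym/q_ne1].
- by [].
- by split=> // -[/q_ne1].
- by split=> // -[/q_ne1].
Qed.

Lemma inert_classE : inert_class q pi C <-> twisted Gt^`(1) g.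
Proof.
rewrite /inert_class split_classE mixed_classE.
have : twisted Gt^`(1) g ==> twisted Gt g by apply/implyP/twistedS/der_sub.
by case: (twisted Gt g); case: (twisted _ _) => //= _; split=> // -[].
Qed.

End UnambiguousClass.

(** * The subgroups H_2(G)_C and H_2'(G)_C *)

Local Open Scope ring_scope.

Section Spans.
Hypothesis H2_ker : H2_order G q.
Implicit Types S : {ffun gT * gT -> int} -> Prop.

Lemma span_full S a : S a -> cycle2 G a -> pairing a != 0 ->
  forall c, cycle2 G c -> in_span_H2 G S c.
Proof.
move=> Sa cyc_a nz_a c cyc_c; have [k def_c] := Zp_mulrn_onto (pairing c) ker_prime nz_a.
exists [:: (k%:Z, a)]; split=> [_ /[1!inE]/eqP-> // |].
rewrite big_seq1; apply: (pairing_eq0_bdry H2_ker).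
  by apply: cycle2B => //; apply: cycle2Mz.
by rewrite raddfB raddfMz /= -pmulrn -def_c subrr.
Qed.

Lemma span_pairing0 S c : (forall a, S a -> pairing a = 0) ->
  in_span_H2 G S c -> pairing c = 0.
Proof.
move=> S0 [s [sS /pairing_bdry]].
suff sum0 : pairing (\sum_(a <- s) a.2 *~ a.1) = 0 by rewrite raddfB /= sum0 subr0.
rewrite raddf_sum big1_seq // => a /andP[_ /sS Sa].
by rewrite raddfMz /= S0 // mul0rz.
Qed.

Definition span_is_full S (b : bool) :=
  (b -> forall c, cycle2 G c -> in_span_H2 G S c) /\
  (~~ b -> forall c, in_span_H2 G S c -> pairing c = 0).

Lemma same_span_H2 S S' b b' : span_is_full S b -> span_is_full S' b' ->
  same_subgroup_H2 G (in_span_H2 G S) (in_span_H2 G S') <-> b = b'.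
Proof.
move=> [fullS trivS] [fullS' trivS'].
have in_span0 S'' c : cycle2 G c -> pairing c = 0 -> in_span_H2 G S'' c.
  move=> cyc_c pc; exists [::]; split=> //.
  by rewrite big_nil subr0; apply: (pairing_eq0_bdry H2_ker).
have [c [cyc_c pc]] := pairing_surj 1.
have nz_pc : pairing c <> 0 by rewrite pc; apply/eqP/oner_neq0.
split=> [same | eq_b d cyc_d]; last first.
  subst b'; case: b fullS trivS fullS' trivS' => fullS trivS fullS' trivS'.
    by split=> _; [apply: fullS' | apply: fullS].
  by split=> span_d; apply: in_span0 => //; [apply: (trivS isT) | apply: (trivS' isT)].
case: b b' fullS trivS fullS' trivS' => -[] // fullS trivS fullS' trivS'.
  by case: nz_pc; apply/trivS'/(same c cyc_c).1/fullS.
by case: nz_pc; apply/trivS/(same c cyc_c).2/fullS'.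
Qed.

Section ClassFamily.
Variables (r : nat) (C : 'I_r -> {set gT}).
Hypothesis unamb : forall i, unambiguous G (C i).

Local Notation twisted_some H := [exists i, twisted H (repr (C i))].

Lemma pairs_span_is_full (H : {group sT}) (D : gT -> {set gT}) :
  H <| Gt -> (forall g, D g = 'C_G[g] :&: pi @* H) ->
  span_is_full (fun c => exists i g z, [/\ g \in C i, z \in D g & c = pair2 g z])
               (twisted_some H).
Proof.
move=> nHGt defD; split.
  case/existsP=> i /existsP[x /and3P[Hx c_xg nc]].
  have Gt_x := subsetP (normal_sub nHGt) x Hx.
  have Gg := class_sub (unamb i) (repr_class (unamb i)).
  apply: (@span_full _ (pair2 (repr (C i)) (pi x))).
  - exists i, (repr (C i)), (pi x); split=> //; first exact: repr_class.
    by rewrite defD; apply/setIP; split; [apply/setIP; rewrite morph_in | apply: mem_morphim].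
  - by apply: cycle2_pair2; rewrite ?morph_in //; apply/esym/cent1P.
  by rewrite pairing_pair2.
move=> untw c; apply: span_pairing0 => a [i [g [z [Cg]]]].
rewrite defD => /setIP[/setIP[_ c_zg] /morphimP[x Gt_x Hx def_z]] ->; subst z.
apply/eqP; rewrite pairing_pair2 ?(class_sub (unamb i)) //.
apply: contraR untw => nc; apply/existsP; exists i.
by apply: (twisted_class (unamb i) nHGt Cg); apply/existsP; exists x; rewrite Hx c_zg.
Qed.

Lemma same_H2_C_H2'_C :
  same_subgroup_H2 G (H2_C G C) (H2'_C G C) <-> twisted_some Gt = twisted_some Gt^`(1)%g.
Proof.
have CGt g : 'C_G[g] = 'C_G[g] :&: pi @* Gt by rewrite piGt setIAC setIid.
have CGt' g : 'C_G[g] :&: G^`(1)%g = 'C_G[g] :&: pi @* Gt^`(1)%g by rewrite morphim_der ?piGt.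
exact: same_span_H2 (pairs_span_is_full (normal_refl Gt) CGt)
                    (pairs_span_is_full (der_normal 1 Gt) CGt').
Qed.

Lemma class_kinds_twisted :
  twisted_some Gt <> twisted_some Gt^`(1)%g <->
  (forall i, ~ inert_class q pi (C i)) /\ exists i, mixed_class q pi (C i).
Proof.
have inertE i := inert_classE (unamb i); have mixedE i := mixed_classE (unamb i).
have twisted_der i : twisted Gt^`(1)%g (repr (C i)) -> twisted Gt (repr (C i)).
  exact: twistedS (der_sub 1 Gt).
split=> [neq | [not_inert [i /mixedE/andP[tw_i _]] eq_tw]].
  have untw' i : ~~ twisted Gt^`(1)%g (repr (C i)).
    apply/negP => tw'_i; apply: neq.
    by rewrite (introT existsP (ex_intro _ i tw'_i)); apply/existsP; exists i; apply: twisted_der.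
  have /existsP[i tw_i] : twisted_some Gt.
    by apply: contra_notT neq => /negbTE->; apply/esym/negbTE/existsPn.
  by split=> [j /inertE | ]; [apply/negP/untw' | exists i; apply/mixedE; rewrite tw_i untw'].
have /existsP[j tw'_j] : twisted_some Gt^`(1)%g by rewrite -eq_tw; apply/existsP; exists i.
by apply: (not_inert j); apply/inertE.
Qed.

End ClassFamily.

End Spans.

End SchurCover.

Theorem corollary5p3 (p : nat) (gT : finGroupType) (G : {group gT})
  (sT : finGroupType) (Gt : {group sT}) (pi : {morphism Gt >-> gT})
  (r : nat) (C : 'I_r -> {set gT}) :
  prime p -> pseudosimple G -> split_pp_type p G -> schur_cover G pi ->
  (forall i, unambiguous G (C i)) ->
  (~ same_subgroup_H2 G (H2_C G C) (H2'_C G C) <->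
   ((forall i, ~ inert_class p pi (C i)) /\ exists i, mixed_class p pi (C i))).
Proof.
move=> p_prime _ [_ _ H2_p] [piGt ker_center ker_der H2_ker] unamb.
have q_p : #|'ker pi| = p := H2_order_uniq H2_ker H2_p.
have ker_prime : prime #|'ker pi| by rewrite q_p.
rewrite -q_p (same_H2_C_H2'_C piGt ker_center ker_prime ker_der H2_ker unamb).
exact (class_kinds_twisted piGt ker_center ker_prime unamb).
Qed.
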